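(* For the localized tent shears described in the context, the projective process $(\phi_n(x),D_x\phi_nu/|D_x\phi_nu|)$ on $\mathbb T^2\times\mathbb P^1$ is irreducible.
   Context: Let $F_0$ be the $1$-periodic piecewise linear function with $F_0(\frac12\pm\frac18)=0$, $F_0(\frac12)=1$, linear on $[\frac38,\frac12]$ and $[\frac12,\frac58]$, and zero on $[0,1]\setminus[\frac38,\frac58]$; $F_\alpha(x)=F_0(x-\alpha)$; $v_{\alpha,1}(x)=(F_\alpha(x_2),0)$, $v_{\alpha,2}(x)=(0,F_\alpha(x_1))$ on $\mathbb T^2$. Let $(\alpha_n,\beta_n,i_n)_{n\ge1}$ be i.i.d. uniform on $[0,1]\times[0,1]\times\{1,2\}$, $V_n=\beta_nv_{\alpha_n,i_n}$, $\varphi^w$ the time-1 flow of $w$, and $\phi_n=\varphi^{V_n}\circ\cdots\circ\varphi^{V_1}$. $\mathbb P^1$ is the space of lines through the origin in $\mathbb R^2$. A Markov chain on state space $E$ is irreducible if for every $z\in E$ and nonempty open $O\subseteq E$ there is $n$ with $\mathbb P(Z_n\in O\mid Z_0=z)>0$. *)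

From HB Require Import structures.
From mathcomp Require Import all_boot all_order all_algebra.
From mathcomp Require Import all_classical all_reals all_analysis.
Set Implicit Arguments. Unset Strict Implicit. Unset Printing Implicit Defensive.
Import Order.TTheory GRing.Theory Num.Theory.
Import numFieldNormedType.Exports.
Local Open Scope classical_set_scope.
Local Open Scope ring_scope.

Section Defs.
Variable R : realType.

Definition frac (y : R) : R := y - (Num.floor y)%:~R.

Definition F0 (y : R) : R := Num.max 0 (1 - 8 * `|frac y - 2^-1|).

(* its derivative (right derivative convention at the three kinks, a null set) *)
Definition dF0 (y : R) : R :=
  let t := frac y in
  if (3 / 8 <= t) && (t < 2^-1) then 8
  else if (2^-1 <= t) && (t < 5 / 8) then -8 else 0.

Definition Fa (a y : R) : R := F0 (y - a).
Definition dFa (a y : R) : R := dF0 (y - a).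

(* A state (x, v) : R^2 x R^2 is a lift of (x mod Z^2, [v]) in T^2 x P^1.
   step a b i applies the time-1 flow of V = b * v_{a,i} (i = true <-> i = 1,
   i = false <-> i = 2) to the position x (a shear, lifted to R^2) and its
   Jacobian at x to the tangent vector v. *)
Definition step (a b : R) (i : bool) (p : (R * R) * (R * R)) : (R * R) * (R * R) :=
  let x := p.1 in let v := p.2 in
  if i then ((x.1 + b * Fa a x.2, x.2), (v.1 + b * dFa a x.2 * v.2, v.2))
  else ((x.1, x.2 + b * Fa a x.1), (v.1, v.2 + b * dFa a x.1 * v.1)).

(* Z n = (phi_n(x), D_x phi_n u), a lift of the projective process at time n *)
Fixpoint proj_process (alpha beta : nat -> R) (idx : nat -> bool)
    (z0 : (R * R) * (R * R)) (n : nat) : (R * R) * (R * R) :=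
  match n with
  | 0 => z0
  | k.+1 => step (alpha k) (beta k) (idx k) (proj_process alpha beta idx z0 k)
  end.

(* open subsets of T^2 x P^1, described as their (saturated) preimages in
   R^2 x (R^2 \ {0}) under the quotient map (x, v) |-> (x mod Z^2, [v]) *)
Definition open_TP (O : set ((R * R) * (R * R))) : Prop :=
  [/\ open O,
      O `<=` [set p | p.2 != (0, 0)] &
      forall (x v : R * R) (m1 m2 : int) (l : R), l != 0 ->
        O (x, v) <-> O ((x.1 + m1%:~R, x.2 + m2%:~R), (l * v.1, l * v.2))].

Definition unif_bool (C : set bool) : R :=
  ((`[< C true >])%:R + (`[< C false >])%:R) / 2.

(* (alpha_k, beta_k, i_k)_k i.i.d. uniform on [0,1] x [0,1] x {1,2}:
   measurable, and the finite-dimensional distributions are the product ones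
   (product rule on all measurable rectangles). *)
Definition iid_uniform d (Omega : measurableType d) (P : probability Omega R)
    (alpha beta : nat -> Omega -> R) (idx : nat -> Omega -> bool) : Prop :=
  [/\ forall k, measurable_fun setT (alpha k),
      forall k, measurable_fun setT (beta k),
      forall k, measurable_fun setT (idx k) &
      forall (n : nat) (A B : nat -> set R) (C : nat -> set bool),
        (forall k, measurable (A k)) -> (forall k, measurable (B k)) ->
        P (\bigcap_(k in `I_n)
              [set w | A k (alpha k w) /\ B k (beta k w) /\ C k (idx k w)])
        = (\prod_(k < n)
             (fine (lebesgue_measure (A k `&` `[0, 1]))
              * fine (lebesgue_measure (B k `&` `[0, 1]))
              * unif_bool (C k)))%:E].

End Defs.

From Pilot Require Import Defs.
From HB Require Import structures.
From mathcomp Require Import all_boot all_order all_algebra.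
From mathcomp Require Import all_classical all_reals all_analysis.
From mathcomp Require Import ring lra measurable_realfun.
Import Order.TTheory GRing.Theory Num.Theory.
Import numFieldNormedType.Exports.
Local Open Scope classical_set_scope.
Local Open Scope ring_scope.
Set Implicit Arguments. Unset Strict Implicit. Unset Printing Implicit Defensive.

(* Choosing alpha so that the sheared coordinate sits at 7/16 or 9/16 (where
   F_alpha = 1/2 and F_alpha' = +-8) and beta = |k|/8, one step translates the
   point by |k|/16 and acts on tangent vectors by the elementary matrix with
   off-diagonal entry k.  Composing such ideal steps, one first turns u into a
   multiple of (1,1), then into a multiple of any target direction, and finally
   moves the point anywhere mod Z^2 by pairs of opposite shears, which cancel
   on the tangent vector.  Each step is Lipschitz in the state and in
   (alpha, beta) near the ideal parameters, so a product box of parameters,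
   which has positive probability, keeps the process inside the open set. *)

Section TentShears.
Variable R : realType.
Local Notation state := ((R * R) * (R * R))%type.
Local Notation frac := (@Defs.frac R).

Lemma frac_itv (z : R) : 0 <= frac z < 1.
Proof.
rewrite /Defs.frac; have /andP[h1 h2] := floor_itv z.
rewrite intrD in h2; apply/andP; split; lra.
Qed.

Lemma frac_addz (t : R) (m : int) : 0 <= t < 1 -> frac (t + m%:~R) = t.
Proof.
move=> /andP[t0 t1]; rewrite /Defs.frac.
have -> : Num.floor (t + m%:~R) = m.
  by apply: floor_def; rewrite intrD; apply/andP; split; lra.
by rewrite addrK.
Qed.

Lemma frac_shift (z z0 r : R) : `|z - z0| <= r -> r <= frac z0 -> frac z0 + r < 1 ->
  frac z = frac z0 + (z - z0).
Proof.
move=> hz hr1 hr2.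
have hz' : z = (frac z0 + (z - z0)) + (Num.floor z0)%:~R by rewrite /Defs.frac; ring.
rewrite {1}hz' frac_addz //; move: hz; rewrite ler_norml => /andP[h1 h2].
by apply/andP; split; lra.
Qed.

Lemma frac_sub_frac (c t : R) : 0 <= t < 1 -> frac (c - frac (c - t)) = t.
Proof.
move=> ht.
have -> : c - frac (c - t) = t + (Num.floor (c - t))%:~R by rewrite /Defs.frac; ring.
exact: frac_addz.
Qed.

Lemma Fa_rising (a y t : R) : frac (y - a) = t -> 3/8 <= t -> t < 2^-1 ->
  Fa a y = 8 * t - 3 /\ dFa a y = 8.
Proof.
move=> ft h1 h2; rewrite /Fa /dFa /F0 /dF0 ft; split.
  by rewrite ltr0_norm ?max_r; lra.
by rewrite h1 h2.
Qed.

Lemma Fa_falling (a y t : R) : frac (y - a) = t -> 2^-1 <= t -> t < 5/8 ->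
  Fa a y = 5 - 8 * t /\ dFa a y = -8.
Proof.
move=> ft h1 h2; rewrite /Fa /dFa /F0 /dF0 ft; split.
  by rewrite ger0_norm ?max_r; lra.
have -> : (t < 2^-1) = false by apply/negbTE; rewrite -leNgt.
by rewrite andbF h1 h2.
Qed.

(* F_0 equals 1/2 at both points, with slope 8 at 7/16 and -8 at 9/16. *)
Definition tent_point (s : bool) : R := if s then 7/16 else 9/16.

Lemma tent_point_itv s : 7/16 <= tent_point s <= 9/16.
Proof. by case: s; rewrite /tent_point; apply/andP; split; lra. Qed.

(* [step (ideal_alpha i k p) (ideal_beta k) i p = ideal_step i k p]. *)
Definition ideal_step (i : bool) (k : R) (p : state) : state :=
  if i then ((p.1.1 + `|k| / 16, p.1.2), (p.2.1 + k * p.2.2, p.2.2))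
  else ((p.1.1, p.1.2 + `|k| / 16), (p.2.1, p.2.2 + k * p.2.1)).

Definition ideal_alpha (i : bool) (k : R) (p : state) : R :=
  frac ((if i then p.1.2 else p.1.1) - tent_point (0 <= k)).

Definition ideal_beta (k : R) : R := `|k| / 8.

Lemma ideal_alpha_itv i k (p : state) : 0 <= ideal_alpha i k p <= 1.
Proof.
have /andP[? ?] := frac_itv ((if i then p.1.2 else p.1.1) - tent_point (0 <= k)).
by apply/andP; split; rewrite /ideal_alpha; lra.
Qed.

Lemma ideal_beta_itv k : `|k| <= 8 -> 0 <= ideal_beta k <= 1.
Proof. by rewrite /ideal_beta => ?; apply/andP; split; rewrite ?divr_ge0 //; lra. Qed.

Definition near4 (e : R) (p q : state) :=
  [/\ `|p.1.1 - q.1.1| <= e, `|p.1.2 - q.1.2| <= e,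
      `|p.2.1 - q.2.1| <= e & `|p.2.2 - q.2.2| <= e].

Definition swap_state (p : state) : state := ((p.1.2, p.1.1), (p.2.2, p.2.1)).

Lemma step_swap a b (p : state) :
  step a b false p = swap_state (step a b true (swap_state p)).
Proof. by case: p => [[? ?] [? ?]]. Qed.

Lemma ideal_step_swap k (p : state) :
  ideal_step false k p = swap_state (ideal_step true k (swap_state p)).
Proof. by case: p => [[? ?] [? ?]]. Qed.

Lemma near4_swap e (p q : state) :
  near4 e p q -> near4 e (swap_state p) (swap_state q).
Proof. by case=> *; split. Qed.

(* The error bound e <= 1/64 keeps the sheared coordinate on one linear piece
   of the tent, where step is affine with coefficients bounded in terms of M. *)
Lemma step_near_ideal_true e M a b k (p p0 : state) :
  0 <= e -> e <= 1/64 -> `|k| <= 8 -> `|p0.2.2| <= M ->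
  `|a - ideal_alpha true k p0| <= e -> `|b - ideal_beta k| <= e -> near4 e p p0 ->
  near4 ((8 * M + 18) * e) (step a b true p) (ideal_step true k p0).
Proof.
case: p p0 => [[x1 x2] [v1 v2]] [[y1 y2] [w1 w2]] /=.
rewrite /ideal_alpha /ideal_beta /= => e0 e1 hk hM ha hb [/= h1 h2 h3 h4].
have /andP[t1 t2] := tent_point_itv (0 <= k).
have ht : frac (y2 - frac (y2 - tent_point (0 <= k))) = tent_point (0 <= k).
  by apply: frac_sub_frac; apply/andP; split; lra.
set a0 := frac (y2 - tent_point (0 <= k)) in ha ht.
set dz := (x2 - a) - (y2 - a0).
have hdz : `|dz| <= 2 * e.
  have -> : dz = (x2 - y2) - (a - a0) by rewrite /dz; ring.
  by apply: le_trans (ler_normB _ _) _; lra.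
have hz : frac (x2 - a) = tent_point (0 <= k) + dz.
  by rewrite -ht; apply: (@frac_shift _ _ (1/32)); rewrite ?ht; lra.
move: h1 h2 h3 h4 hb hdz hM hk; rewrite /near4 /= !ler_norml.
move=> /andP[h1 h1'] /andP[h2 h2'] /andP[h3 h3'] /andP[h4 h4'] /andP[hb hb'] /andP[g1 g2]
  /andP[hM hM'] /andP[hk hk'].
rewrite /tent_point in hz; case: (lerP 0 k) hz => hk0 hz.
- have [-> ->] := Fa_rising hz ltac:(lra) ltac:(lra).
  rewrite ger0_norm // in hb hb' *.
  by split; apply/andP; split; try lra; nra.
- have [-> ->] := Fa_falling hz ltac:(lra) ltac:(lra).
  rewrite ltr0_norm // in hb hb' *.
  by split; apply/andP; split; try lra; nra.
Qed.

Lemma step_near_ideal e M a b i k (p p0 : state) :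
  0 <= e -> e <= 1/64 -> `|k| <= 8 -> `|p0.2.1| <= M -> `|p0.2.2| <= M ->
  `|a - ideal_alpha i k p0| <= e -> `|b - ideal_beta k| <= e -> near4 e p p0 ->
  near4 ((8 * M + 18) * e) (step a b i p) (ideal_step i k p0).
Proof.
move=> e0 e1 hk hM1 hM2 ha hb hp; case: i ha => ha.
  exact: step_near_ideal_true.
rewrite step_swap ideal_step_swap.
by apply: near4_swap; apply: step_near_ideal_true => //; exact: near4_swap.
Qed.

Definition ideal_run (ms : seq (bool * R)) (p : state) : state :=
  foldl (fun q m => ideal_step m.1 m.2 q) p ms.

Lemma ideal_run_cat ms1 ms2 (p : state) :
  ideal_run (ms1 ++ ms2) p = ideal_run ms2 (ideal_run ms1 p).
Proof. by rewrite /ideal_run foldl_cat. Qed.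

Lemma ideal_run_takeS ms (p : state) n : (n < size ms)%N ->
  ideal_run (take n.+1 ms) p =
  ideal_step (nth (true, 0) ms n).1 (nth (true, 0) ms n).2 (ideal_run (take n ms) p).
Proof. by move=> hn; rewrite (take_nth (true, 0) hn) /ideal_run foldl_rcons. Qed.

Lemma proj_process_near_ideal_run (ms : seq (bool * R)) (p : state) (M e : R)
    (al be : nat -> R) (id : nat -> bool) (n : nat) :
  0 <= M -> 0 <= e ->
  (forall j, (j < size ms)%N -> `|(nth (true, 0) ms j).2| <= 8) ->
  (forall j, (j < size ms)%N ->
     `|(ideal_run (take j ms) p).2.1| <= M /\ `|(ideal_run (take j ms) p).2.2| <= M) ->
  (forall j, (j < size ms)%N -> (8 * M + 18) ^+ j * e <= 1/64) ->
  (forall j, (j < n)%N ->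
     [/\ `|al j - ideal_alpha (nth (true, 0) ms j).1 (nth (true, 0) ms j).2
                    (ideal_run (take j ms) p)| <= e,
         `|be j - ideal_beta (nth (true, 0) ms j).2| <= e &
         id j = (nth (true, 0) ms j).1]) ->
  (n <= size ms)%N ->
  near4 ((8 * M + 18) ^+ n * e) (proj_process al be id p n) (ideal_run (take n ms) p).
Proof.
move=> M0 e0 hk hM hsmall; elim: n => [|n IH] hpar hn.
  by rewrite expr0 mul1r take0; split; rewrite subrr normr0.
have hCn : 1 <= (8 * M + 18) ^+ n by rewrite exprn_ege1 //; lra.
have [ha hb hi] := hpar n (ltnSn n).
have [hM1 hM2] := hM n hn.
rewrite /= ideal_run_takeS // hi exprS -mulrA.
apply: step_near_ideal; rewrite ?hk ?hsmall //.
- by rewrite mulr_ge0 // exprn_ge0; lra.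
- by apply: le_trans ha _; rewrite ler_peMl.
- by apply: le_trans hb _; rewrite ler_peMl.
- by apply: IH (ltnW hn) => j hj; apply: hpar; rewrite ltnS ltnW.
Qed.

Lemma neq0_of_norm_le (a b : R) : `|a| <= `|b| -> (a, b) != (0, 0) -> b != 0.
Proof.
move=> hab; apply: contraNneq => b0; move: hab; rewrite b0 normr0 normr_le0.
by move=> /eqP ->.
Qed.

Lemma norm_ratio_subr_le2 (a b : R) : `|a| <= `|b| -> b != 0 -> `|1 - a / b| <= 2.
Proof.
move=> hab b0; apply: le_trans (ler_normB _ _) _; rewrite normr1 normrM normfV.
have : `|a| / `|b| <= 1 by rewrite ler_pdivrMr ?normr_gt0 // mul1r.
lra.
Qed.

Lemma ideal_step_to_diagonal (p : state) : p.2 != (0, 0) ->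
  exists i k c, [/\ `|k| <= 2, c != 0 & (ideal_step i k p).2 = (c, c)].
Proof.
case: p => x [u1 u2] /= hu; have [h|/ltW h] := lerP `|u1| `|u2|.
- have u20 := neq0_of_norm_le h hu.
  exists true, (1 - u1 / u2), u2; split; rewrite ?norm_ratio_subr_le2 //.
  by rewrite /ideal_step /=; congr (_, _); field.
- have u10 : u1 != 0 by apply: (neq0_of_norm_le h); apply: contraNneq hu => -[-> ->].
  exists false, (1 - u2 / u1), u1; split; rewrite ?norm_ratio_subr_le2 //.
  by rewrite /ideal_step /=; congr (_, _); field.
Qed.

Lemma ideal_step_from_diagonal (x : R * R) (c w1 w2 : R) : c != 0 -> (w1, w2) != (0, 0) ->
  exists i k l, [/\ `|k| <= 2, l != 0 & (ideal_step i k (x, (c, c))).2 = (l * w1, l * w2)].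
Proof.
move=> c0 hw; have [h|/ltW h] := lerP `|w1| `|w2|.
- have w20 := neq0_of_norm_le h hw.
  exists true, (w1 / w2 - 1), (c / w2).
  split; rewrite 1?distrC ?norm_ratio_subr_le2 ?mulf_neq0 ?invr_eq0 //.
  by rewrite /ideal_step /=; congr (_, _); field.
- have w10 : w1 != 0 by apply: (neq0_of_norm_le h); apply: contraNneq hw => -[-> ->].
  exists false, (w2 / w1 - 1), (c / w1).
  split; rewrite 1?distrC ?norm_ratio_subr_le2 ?mulf_neq0 ?invr_eq0 //.
  by rewrite /ideal_step /=; congr (_, _); field.
Qed.

Lemma ideal_run_translate (i : bool) (b : R) (p : state) : 0 <= b ->
  ideal_run [:: (i, 8 * b); (i, - (8 * b))] p =
  if i then ((p.1.1 + b, p.1.2), p.2) else ((p.1.1, p.1.2 + b), p.2).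
Proof.
case: p => [[x1 x2] [v1 v2]] b0.
rewrite /ideal_run /= /ideal_step normrN ger0_norm; last lra.
by case: i; congr ((_, _), (_, _)) => /=; field.
Qed.

Lemma ideal_run_reaches (x u y w : R * R) : u != (0, 0) -> w != (0, 0) ->
  exists2 ms : seq (bool * R),
    (forall j, (j < size ms)%N -> `|(nth (true, 0) ms j).2| <= 8) &
    exists (m1 m2 : int) (l : R), l != 0 /\
      ideal_run ms (x, u) = ((y.1 + m1%:~R, y.2 + m2%:~R), (l * w.1, l * w.2)).
Proof.
move=> hu hw.
have [i1 [k1 [c [hk1 c0 e1]]]] := ideal_step_to_diagonal (p := (x, u)) hu.
case: w hw => w1 w2 hw.
have [i2 [k2 [l [hk2 l0 e2]]]] := ideal_step_from_diagonal (ideal_step i1 k1 (x, u)).1 c0 hw.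
set q := ideal_step i2 k2 _ in e2.
have e12 : ideal_run [:: (i1, k1); (i2, k2)] (x, u) = q.
  by rewrite /ideal_run /= [in LHS](surjective_pairing (ideal_step i1 k1 (x, u))) e1.
set b1 := frac (y.1 - q.1.1); set b2 := frac (y.2 - q.1.2).
have /andP[b10 _] := frac_itv (y.1 - q.1.1).
have /andP[b20 _] := frac_itv (y.2 - q.1.2).
exists ([:: (i1, k1); (i2, k2)] ++ [:: (true, 8 * b1); (true, - (8 * b1))] ++
        [:: (false, 8 * b2); (false, - (8 * b2))]).
  have n8 (b : R) : 0 <= b < 1 -> `|8 * b| <= 8 /\ `|- (8 * b)| <= 8.
    by move=> /andP[? ?]; rewrite normrN ger0_norm; lra.
  have [? ?] := n8 b1 (frac_itv _); have [? ?] := n8 b2 (frac_itv _).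
  by case=> [|[|[|[|[|[|j]]]]]] //= _; lra.
exists (- Num.floor (y.1 - q.1.1)), (- Num.floor (y.2 - q.1.2)), l; split => //.
rewrite !ideal_run_cat e12 !ideal_run_translate //= -e2 /b1 /b2 /Defs.frac !intrN.
by congr ((_, _), _); ring.
Qed.

Lemma ideal_run_stable (ms : seq (bool * R)) (p : state) (eps : R) : 0 < eps ->
  (forall j, (j < size ms)%N -> `|(nth (true, 0) ms j).2| <= 8) ->
  exists2 dl : R, 0 < dl <= 1/2 & forall (al be : nat -> R) (id : nat -> bool),
    (forall j, (j < size ms)%N ->
     [/\ `|al j - ideal_alpha (nth (true, 0) ms j).1 (nth (true, 0) ms j).2
                    (ideal_run (take j ms) p)| <= dl,
         `|be j - ideal_beta (nth (true, 0) ms j).2| <= dl &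
         id j = (nth (true, 0) ms j).1]) ->
    near4 eps (proj_process al be id p (size ms)) (ideal_run ms p).
Proof.
move=> eps0 hk; set n := size ms.
pose v j := (ideal_run (take j ms) p).2.
pose M := \sum_(j < n) (`|(v j).1| + `|(v j).2|).
have hM j : (j < n)%N -> `|(v j).1| <= M /\ `|(v j).2| <= M.
  move=> hj; rewrite /M (bigD1 (Ordinal hj)) //=.
  have : 0 <= \sum_(i < n | i != Ordinal hj) (`|(v i).1| + `|(v i).2|).
    by rewrite sumr_ge0 // => i _; rewrite addr_ge0.
  by have := normr_ge0 (v j).1; have := normr_ge0 (v j).2; split; lra.
have M0 : 0 <= M by rewrite sumr_ge0 // => i _; rewrite addr_ge0.
set C := 8 * M + 18.
have C1 : 1 < C by rewrite /C; lra.
have Cn0 : 0 < C ^+ n by rewrite exprn_gt0 //; lra.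
pose m := Num.min (1/64) eps.
have m0 : 0 < m by rewrite lt_min; apply/andP; split; lra.
have [m1 m2] : m <= 1/64 /\ m <= eps by split; rewrite ge_min lexx ?orbT.
have Cdl : C ^+ n * (m / C ^+ n) = m by rewrite mulrC divfK ?gt_eqF.
have dlm : m / C ^+ n <= m by rewrite ler_pdivrMr // ler_peMr ?exprn_ege1 // ltW.
exists (m / C ^+ n); first by rewrite divr_gt0 //=; lra.
move=> al be id hpar.
have hsmall j : (j < n)%N -> C ^+ j * (m / C ^+ n) <= 1/64.
  move=> hj; apply: le_trans m1; rewrite -[leRHS]Cdl ler_wpM2r ?divr_ge0 ?ltW //.
  by rewrite ltr_eXn2l //; lra.
have := proj_process_near_ideal_run M0 (ltW (divr_gt0 m0 Cn0)) hk hM hsmall hpar (leqnn n).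
by rewrite -/C Cdl take_size => -[? ? ? ?]; split; lra.
Qed.

Lemma open_coord_ball (O : set state) (p : state) : open O -> O p ->
  exists2 e : R, 0 < e & forall q : state,
    `|p.1.1 - q.1.1| < e -> `|p.1.2 - q.1.2| < e ->
    `|p.2.1 - q.2.1| < e -> `|p.2.2 - q.2.2| < e -> O q.
Proof.
move=> oO Op; have /nbhs_ballP[e /= e0 He] := oO p Op.
by exists e => // q *; apply: He; do 2 split; rewrite -ball_normE.
Qed.

End TentShears.

Section Measurability.
Variable R : realType.
Local Notation state := ((R * R) * (R * R))%type.

Lemma measurable_frac : measurable_fun setT (@Defs.frac R).
Proof.
apply: measurable_funB => //; apply: nondecreasing_measurable => // y z yz.
by rewrite ler_int le_floor.
Qed.

Lemma measurable_F0 : measurable_fun setT (@F0 R).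
Proof.
apply: (measurable_maxr (f := cst 0)) => //.
apply: (measurable_funB (f := cst 1)) => //; apply: (measurable_funM (f := cst 8)) => //.
apply: measurableT_comp; first exact: normr_measurable.
by apply: (measurable_funB (g := cst 2^-1)) => //; exact: measurable_frac.
Qed.

Lemma measurable_dF0 : measurable_fun setT (@dF0 R).
Proof.
have mle (c : R) : measurable_fun setT (fun y => c <= Defs.frac y).
  by apply: (measurable_fun_ler (f := cst c)) => //; exact: measurable_frac.
have mlt (c : R) : measurable_fun setT (fun y => Defs.frac y < c).
  by apply: (measurable_fun_ltr (g := cst c)) => //; exact: measurable_frac.
rewrite /dF0; apply: measurable_fun_ifT => //; first exact: measurable_and.
by apply: measurable_fun_ifT => //; exact: measurable_and.
Qed.

Context d (Omega : measurableType d).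
Implicit Types f g h l : Omega -> R.

Lemma measurable_fun_shear f g h : measurable_fun setT f -> measurable_fun setT g ->
  measurable_fun setT h -> measurable_fun setT (fun w => f w + g w * F0 (h w)).
Proof.
move=> mf mg mh; apply: measurable_funD => //; apply: measurable_funM => //.
exact: measurableT_comp measurable_F0 mh.
Qed.

Lemma measurable_fun_dshear f g h l : measurable_fun setT f -> measurable_fun setT g ->
  measurable_fun setT h -> measurable_fun setT l ->
  measurable_fun setT (fun w => f w + g w * dF0 (h w) * l w).
Proof.
move=> mf mg mh ml; apply: measurable_funD => //.
apply: measurable_funM => //; apply: measurable_funM => //.
exact: measurableT_comp measurable_dF0 mh.
Qed.

Lemma measurable_proj_process (al be : nat -> Omega -> R) (id : nat -> Omega -> bool)
    (z : state) (n : nat) :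
  (forall k, measurable_fun setT (al k)) -> (forall k, measurable_fun setT (be k)) ->
  (forall k, measurable_fun setT (id k)) ->
  let Z w := proj_process (al^~ w) (be^~ w) (id^~ w) z n in
  [/\ measurable_fun setT (fun w => (Z w).1.1), measurable_fun setT (fun w => (Z w).1.2),
      measurable_fun setT (fun w => (Z w).2.1) & measurable_fun setT (fun w => (Z w).2.2)].
Proof.
move=> ma mb mi; elim: n => [|n [m1 m2 m3 m4]] Z; first by split.
set f1 := (fun w => _.1.1) in m1; set f2 := (fun w => _.1.2) in m2.
set f3 := (fun w => _.2.1) in m3; set f4 := (fun w => _.2.2) in m4.
have ms2 : measurable_fun setT (fun w => f2 w - al n w) by exact: measurable_funB.
have ms1 : measurable_fun setT (fun w => f1 w - al n w) by exact: measurable_funB.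
split.
- rewrite (_ : (fun w => _) =
    fun w => if id n w then f1 w + be n w * F0 (f2 w - al n w) else f1 w).
    by apply: measurable_fun_ifT => //; exact: measurable_fun_shear.
  by apply: funext => w; rewrite /Z /= /step /Fa; case: (id n w).
- rewrite (_ : (fun w => _) =
    fun w => if id n w then f2 w else f2 w + be n w * F0 (f1 w - al n w)).
    by apply: measurable_fun_ifT => //; exact: measurable_fun_shear.
  by apply: funext => w; rewrite /Z /= /step /Fa; case: (id n w).
- rewrite (_ : (fun w => _) =
    fun w => if id n w then f3 w + be n w * dF0 (f2 w - al n w) * f4 w else f3 w).
    by apply: measurable_fun_ifT => //; exact: measurable_fun_dshear.
  by apply: funext => w; rewrite /Z /= /step /dFa; case: (id n w).
- rewrite (_ : (fun w => _) =
    fun w => if id n w then f4 w else f4 w + be n w * dF0 (f1 w - al n w) * f3 w).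
    by apply: measurable_fun_ifT => //; exact: measurable_fun_dshear.
  by apply: funext => w; rewrite /Z /= /step /dFa; case: (id n w).
Qed.

Lemma measurable_dist_lt f (c r : R) : measurable_fun setT f ->
  measurable [set w | `|f w - c| < r].
Proof.
move=> mf; have mlt : measurable_fun setT (fun w => `|f w - c| < r).
  apply: (measurable_fun_ltr (g := cst r)) => //.
  apply: measurableT_comp; first exact: normr_measurable.
  exact: (measurable_funB (g := cst c)).
have := mlt measurableT [set true] I; rewrite setTI.
by congr measurable; apply/seteqP; split => w /=.
Qed.

(* An open set of R^4 is a countable union of rational boxes. *)
Lemma measurable_open_coords f1 f2 f3 f4 (O : set state) :
  measurable_fun setT f1 -> measurable_fun setT f2 ->
  measurable_fun setT f3 -> measurable_fun setT f4 -> open O ->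
  measurable [set w | O ((f1 w, f2 w), (f3 w, f4 w))].
Proof.
move=> m1 m2 m3 m4 oO.
pose B (q1 q2 q3 q4 r : rat) := [set z : state |
  [/\ `|z.1.1 - ratr q1| < ratr r, `|z.1.2 - ratr q2| < ratr r,
      `|z.2.1 - ratr q3| < ratr r & `|z.2.2 - ratr q4| < ratr r]].
pose S q1 q2 q3 q4 r := [set w | B q1 q2 q3 q4 r `<=` O /\
   B q1 q2 q3 q4 r ((f1 w, f2 w), (f3 w, f4 w))].
have -> : [set w | O ((f1 w, f2 w), (f3 w, f4 w))] =
    \bigcup_q1 \bigcup_q2 \bigcup_q3 \bigcup_q4 \bigcup_r S q1 q2 q3 q4 r.
  apply/seteqP; split => w /=; last first.
    by move=> [q1 _ [q2 _ [q3 _ [q4 _ [r _ [hB hw]]]]]]; apply: hB.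
  move=> Ow; have [e e0 He] := open_coord_ball oO Ow.
  have rat_near (c : R) : exists q : rat, `|c - ratr q| < e / 4.
    have [q] := @rat_in_itvoo R (c - e / 4) (c + e / 4) ltac:(lra).
    by rewrite in_itv /= => /andP[? ?]; exists q; rewrite ltr_norml; apply/andP; split; lra.
  have [r] := @rat_in_itvoo R (e / 4) (e / 2) ltac:(lra).
  rewrite in_itv /= => /andP[r1 r2].
  have [q1 h1] := rat_near (f1 w); have [q2 h2] := rat_near (f2 w).
  have [q3 h3] := rat_near (f3 w); have [q4 h4] := rat_near (f4 w).
  exists q1 => //; exists q2 => //; exists q3 => //; exists q4 => //; exists r => //.
  split; last by split; lra.
  move: h1 h2 h3 h4; rewrite !ltr_norml => /andP[? ?] /andP[? ?] /andP[? ?] /andP[? ?].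
  move=> z [/=]; rewrite !ltr_norml => /andP[? ?] /andP[? ?] /andP[? ?] /andP[? ?].
  by apply: He; rewrite /= ltr_norml; apply/andP; split; lra.
apply: bigcupT_measurable_rat => q1; apply: bigcupT_measurable_rat => q2.
apply: bigcupT_measurable_rat => q3; apply: bigcupT_measurable_rat => q4.
apply: bigcupT_measurable_rat => r.
have [hB|hB] := pselect (B q1 q2 q3 q4 r `<=` O); last first.
  by rewrite (_ : S _ _ _ _ _ = set0) //; apply/seteqP; split => w // [].
rewrite (_ : S _ _ _ _ _ = [set w | `|f1 w - ratr q1| < ratr r] `&`
   [set w | `|f2 w - ratr q2| < ratr r] `&` [set w | `|f3 w - ratr q3| < ratr r] `&`
   [set w | `|f4 w - ratr q4| < ratr r]).
  by repeat apply: measurableI; apply: measurable_dist_lt.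
by apply/seteqP; split => w /= => [[_ [? ? ? ?]] | [[[? ?] ?] ?]].
Qed.

Lemma measurable_proj_process_open (al be : nat -> Omega -> R) (id : nat -> Omega -> bool)
    (z : state) (n : nat) (O : set state) :
  (forall k, measurable_fun setT (al k)) -> (forall k, measurable_fun setT (be k)) ->
  (forall k, measurable_fun setT (id k)) -> open O ->
  measurable [set w | O (proj_process (al^~ w) (be^~ w) (id^~ w) z n)].
Proof.
move=> ma mb mi oO; have [m1 m2 m3 m4] := measurable_proj_process z n ma mb mi.
have := measurable_open_coords m1 m2 m3 m4 oO; congr measurable.
by apply/seteqP; split => w /=; case: (proj_process _ _ _ _ _) => [[? ?] [? ?]].
Qed.

End Measurability.

Section ParameterBoxes.
Variable R : realType.

Definition window (dl c : R) : R := if c <= 1/2 then c else c - dl.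

Lemma window_subset_unit (dl c : R) : 0 <= c <= 1 -> 0 < dl <= 1/2 ->
  `[window dl c, window dl c + dl]%classic `<=` (`[0, 1]%classic : set R).
Proof.
move=> /andP[c0 c1] /andP[d0 d1] z /=; rewrite !in_itv /= /window.
by case: (lerP c (1/2)) => ? /andP[? ?]; apply/andP; split; lra.
Qed.

Lemma window_near (dl c z : R) :
  (`[window dl c, window dl c + dl]%classic : set R) z -> `|z - c| <= dl.
Proof.
rewrite /= in_itv /= /window ler_norml.
by case: ifP => _ /andP[? ?]; apply/andP; split; lra.
Qed.

Lemma fine_lebesgue_measure_itvcc (a dl : R) : 0 < dl ->
  fine (lebesgue_measure (`[a, a + dl]%classic : set R)) = dl.
Proof.
move=> dl0; rewrite lebesgue_measure_itv /= lte_fin ltrDl dl0 -EFinD /=.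
by rewrite addrAC subrr add0r.
Qed.

Lemma unif_bool_set1 (i : bool) : unif_bool R [set i] = 1/2.
Proof.
rewrite /unif_bool; case: i.
  by rewrite asboolT // asboolF //= addr0.
by rewrite asboolF // asboolT //= add0r.
Qed.

Context d (Omega : measurableType d).

Lemma iid_uniform_box_gt0 (P : probability Omega R) (al be : nat -> Omega -> R)
    (id : nat -> Omega -> bool) (n : nat) (a0 b0 : nat -> R) (i0 : nat -> bool) (dl : R) :
  iid_uniform P al be id ->
  (forall j, (j < n)%N -> 0 <= a0 j <= 1) -> (forall j, (j < n)%N -> 0 <= b0 j <= 1) ->
  0 < dl <= 1/2 ->
  exists2 S : set Omega, measurable S /\ (0 < P S)%E &
    S `<=` [set w | forall j, (j < n)%N ->
      [/\ `|al j w - a0 j| <= dl, `|be j w - b0 j| <= dl & id j w = i0 j]].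
Proof.
move=> [ma mb mi hprod] ha hb hdl.
pose A j := `[window dl (a0 j), window dl (a0 j) + dl]%classic : set R.
pose B j := `[window dl (b0 j), window dl (b0 j) + dl]%classic : set R.
pose C j := [set i0 j].
pose S := \bigcap_(j in `I_n) [set w | A j (al j w) /\ B j (be j w) /\ C j (id j w)].
exists S; last by move=> w Sw j /Sw[/window_near ? [/window_near ? ->]].
split.
  apply: bigcap_measurableType => j _.
  rewrite (_ : [set w | _] = (setT `&` al j @^-1` A j) `&`
     ((setT `&` be j @^-1` B j) `&` (setT `&` id j @^-1` C j))).
    apply: measurableI; first by apply: ma => //; exact: measurable_itv.
    apply: measurableI; first by apply: mb => //; exact: measurable_itv.
    exact: mi.
  by apply/seteqP; split => w /=; [move=> [? [? ?]] | move=> [[_ ?] [[_ ?] [_ ?]]]].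
rewrite /S hprod => [|k|k]; try exact: measurable_itv.
rewrite lte_fin; apply: prodr_gt0 => k _.
have /andP[dl0 _] := hdl.
have sA := window_subset_unit (ha _ (ltn_ord k)) hdl.
have sB := window_subset_unit (hb _ (ltn_ord k)) hdl.
by rewrite /A /B !setIidl // !fine_lebesgue_measure_itvcc // unif_bool_set1 !mulr_gt0.
Qed.

End ParameterBoxes.

Theorem lemmaA4 (R : realType) (d : measure_display) (Omega : measurableType d)
    (P : probability Omega R)
    (alpha beta : nat -> Omega -> R) (idx : nat -> Omega -> bool) :
  iid_uniform P alpha beta idx ->
  forall (x u : R * R), u != (0, 0) ->
  forall O : set ((R * R) * (R * R)), open_TP O -> O !=set0 ->
  exists n : nat,
    (0 < P [set w | O (proj_process (alpha^~ w) (beta^~ w) (idx^~ w) (x, u) n)])%E.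
Proof.
move=> hiid x u hu O [oO O_ne0 O_sat] [[y w] Oyw].
have [ms hk [m1 [m2 [l [l0 run_eq]]]]] := ideal_run_reaches x y hu (O_ne0 _ Oyw).
have Orun : O (ideal_run ms (x, u)) by rewrite run_eq; apply/(O_sat y w m1 m2 l l0).
have [eps eps0 Oball] := open_coord_ball oO Orun.
have [dl dlP stable] := ideal_run_stable (x, u) (eps := eps / 2) ltac:(lra) hk.
pose m j := nth (true, 0) ms j.
have a0P j : (j < size ms)%N ->
    0 <= ideal_alpha (m j).1 (m j).2 (ideal_run (take j ms) (x, u)) <= 1.
  by rewrite ideal_alpha_itv.
have b0P j : (j < size ms)%N -> 0 <= ideal_beta (m j).2 <= 1 by move/hk/ideal_beta_itv.
have [S [mS PS] S_sub] := iid_uniform_box_gt0 (fun j => (m j).1) hiid a0P b0P dlP.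
exists (size ms); apply: lt_le_trans PS _; apply: le_measure; rewrite ?inE //.
  by case: hiid => ma mb mi _; exact: measurable_proj_process_open.
move=> v /S_sub near_v; have [? ? ? ?] := stable _ _ _ near_v.
by apply: Oball; rewrite distrC; lra.
Qed.
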